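(* Let $C=\mathbb{C}\langle x,y,z\rangle/(x^2,y^2,z^2,[\{x,y\},z],[\{y,z\},x])$, let $\lambda$ be a primitive $n$th root of unity, and let $\mathbb{Z}_n=\langle\sigma\rangle$ act on $C$ by $\sigma(x)=\lambda^{-1}x$, $\sigma(y)=y$, $\sigma(z)=\lambda z$. In the smash product $C\#\mathbb{Z}_n$ put $x'=x\#1$ and $z'=z\#\sigma^{-1}$. Then $(x'z'+z'x')^n$ belongs to the center of $C\#\mathbb{Z}_n$.
   Context: $\{a,b\}=ab+ba$, $[a,b]=ab-ba$. The smash product $C\#\mathbb{Z}_n$ is $C\otimes\mathbb{C}\mathbb{Z}_n$ with multiplication $(a\#\sigma^i)(b\#\sigma^j)=a\,\sigma^i(b)\#\sigma^{i+j}$. *)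

From mathcomp Require Import all_boot all_algebra.
From mathcomp Require Import complex Rstruct.
Set Implicit Arguments. Unset Strict Implicit. Unset Printing Implicit Defensive.
Import GRing.Theory.
Local Open Scope ring_scope.

Notation CC := (Rdefinitions.R[i]).

Section Smash.
Variable K : fieldType.

(* An element of the free algebra is represented by a
   finite formal sum of terms (coefficient, word); two representations denote
   the same element iff they have the same coefficient function [fa_coef]. *)
Definition word := seq 'I_3.
Definition FA := seq (K * word).

Definition gx : 'I_3 := @Ordinal 3 0 isT.
Definition gy : 'I_3 := @Ordinal 3 1 isT.
Definition gz : 'I_3 := @Ordinal 3 2 isT.

Definition fa_coef (p : FA) (w : word) : K := \sum_(t <- p | t.2 == w) t.1.
Definition fa_zero : FA := [::].
Definition fa_one : FA := [:: (1, [::])].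
Definition fa_gen (i : 'I_3) : FA := [:: (1, [:: i])].
Definition fa_add (p q : FA) : FA := p ++ q.
Definition fa_opp (p : FA) : FA := [seq (- t.1, t.2) | t <- p].
Definition fa_sub (p q : FA) : FA := fa_add p (fa_opp q).
Definition fa_mul (p q : FA) : FA := [seq (t.1 * u.1, t.2 ++ u.2) | t <- p, u <- q].
Definition fa_sum (s : seq FA) : FA := flatten s.

Definition fa_anticomm (a b : FA) : FA := fa_add (fa_mul a b) (fa_mul b a).
Definition fa_comm (a b : FA) : FA := fa_sub (fa_mul a b) (fa_mul b a).

Definition C_rel (r : 'I_5) : FA :=
  match val r with
  | 0 => fa_mul (fa_gen gx) (fa_gen gx)
  | 1 => fa_mul (fa_gen gy) (fa_gen gy)
  | 2 => fa_mul (fa_gen gz) (fa_gen gz)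
  | 3 => fa_comm (fa_anticomm (fa_gen gx) (fa_gen gy)) (fa_gen gz)
  | _ => fa_comm (fa_anticomm (fa_gen gy) (fa_gen gz)) (fa_gen gx)
  end.

Definition in_C_ideal (p : FA) : Prop :=
  exists s : seq (FA * 'I_5 * FA),
    forall w, fa_coef p w =
      fa_coef (fa_sum [seq fa_mul (fa_mul t.1.1 (C_rel t.1.2)) t.2 | t <- s]) w.

Definition C_eq (p q : FA) : Prop := in_C_ideal (fa_sub p q).

Variables (n : nat) (lam : K).

(* sigma^i acts on the free algebra by the algebra automorphism
   x |-> lam^-i x, y |-> y, z |-> lam^i z; on a word w it multiplies by
   lam^(i * #z(w)) / lam^(i * #x(w)).  It preserves the ideal, hence acts on C. *)
Definition sigma_pow (i : nat) (p : FA) : FA :=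
  [seq (t.1 * (lam ^+ (i * count_mem gz t.2) / lam ^+ (i * count_mem gx t.2)), t.2)
  | t <- p].

(* An element  sum_{k<n} a_k # sigma^k  is represented by  a : nat -> FA, of
   which only the components k < n matter. *)
Definition SM := nat -> FA.

Definition sm_eq (a b : SM) : Prop := forall k, (k < n)%N -> C_eq (a k) (b k).

(* (a # sigma^i)(b # sigma^j) = a sigma^i(b) # sigma^(i+j). *)
Definition sm_mul (a b : SM) : SM := fun k =>
  fa_sum [seq fa_mul (a i) (sigma_pow i (b j))
         | i <- iota 0 n, j <- [seq j <- iota 0 n | ((i + j) %% n == k)%N]].

Definition sm_one : SM := fun k => if k == 0%N then fa_one else fa_zero.
Definition sm_add (a b : SM) : SM := fun k => fa_add (a k) (b k).
Definition sm_pow (a : SM) (m : nat) : SM := iter m (sm_mul a) sm_one.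

Definition sm_pure (c : FA) (k : nat) : SM := fun l => if l == k then c else fa_zero.

Definition sm_central (w : SM) : Prop :=
  forall v : SM, sm_eq (sm_mul w v) (sm_mul v w).

(* x' = x # 1 and z' = z # sigma^{-1} = z # sigma^(n-1) *)
Definition x' : SM := sm_pure (fa_gen gx) 0.
Definition z' : SM := sm_pure (fa_gen gz) (n.-1).

End Smash.

(* Put a = xz + lam zx.  In the smash product x'z' = xz # sigma^-1 and
   z'x' = z sigma^-1(x) # sigma^-1 = lam zx # sigma^-1, so x'z' + z'x' = a # sigma^-1;
   as a is sigma-invariant, (x'z' + z'x')^n = a^n # 1.  Modulo x^2 = z^2 = 0 we have
   x a = lam a x and z a = lam^-1 a z, so a^n commutes with x and z because lam^n = 1.
   The cross terms of a^n vanish, so a^n = (xz)^n + lam^n (zx)^n = (xz + zx)^n,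
   which commutes with y since [y, {x,z}] = [{x,y}, z] + [{y,z}, x].  Thus a^n is a
   sigma-invariant central element of C, and a^n # 1 is central in C # Z_n. *)

From HB Require Import structures.
From mathcomp Require Import all_boot all_algebra.
From mathcomp Require Import complex Rstruct finmap.
From mathcomp.multinomials Require Import monalg.
Set Implicit Arguments. Unset Strict Implicit. Unset Printing Implicit Defensive.
Import GRing.Theory.
Local Open Scope ring_scope.

Lemma commr_anticomm_jacobi (A : pzRingType) (x y z : A) :
  y * (x * z + z * x) - (x * z + z * x) * y =
  ((x * y + y * x) * z - z * (x * y + y * x)) +
  ((y * z + z * y) * x - x * (y * z + z * y)).
Proof.
rewrite !mulrDl !mulrDr !mulrA.
set a := y * x * z; set b := y * z * x; set c := x * z * y; set d := z * x * y.
set e := x * y * z; set f := z * y * x.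
rewrite [e + a]addrC [d + f]addrC addrACA -opprD.
by rewrite [a + e + _]addrACA [f + d + _]addrACA [f + e]addrC [d + c]addrC addrKA.
Qed.

(* Prop-valued: membership in the ideal generated by the relations of C is an
   existence statement, so MathComp's boolean ideals do not apply. *)
Record twosided_ideal (A : pzRingType) := TwoSidedIdeal {
  ideal_mem :> A -> Prop;
  ideal0 : ideal_mem 0;
  idealD : forall g h, ideal_mem g -> ideal_mem h -> ideal_mem (g + h);
  idealMl : forall a g, ideal_mem g -> ideal_mem (a * g);
  idealMr : forall g a, ideal_mem g -> ideal_mem (g * a)
}.

Section IdealCongruence.
Variables (A : pzRingType) (I : twosided_ideal A).
Implicit Types a c g h k u v : A.

Definition congI g h := I (g - h).
Local Notation "g ~= h" := (congI g h) (at level 70).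

Lemma congI_eq g h : g = h -> g ~= h.
Proof. by move=> ->; rewrite /congI subrr; apply: ideal0. Qed.

Lemma congIMl a g g' : g ~= g' -> a * g ~= a * g'.
Proof. by rewrite /congI -mulrBr; apply: idealMl. Qed.

Lemma congIMr a g g' : g ~= g' -> g * a ~= g' * a.
Proof. by rewrite /congI -mulrBl; apply: idealMr. Qed.

Lemma congI_sym g h : g ~= h -> h ~= g.
Proof. by move/(congIMl (-1)); rewrite /congI -mulrBr !mulN1r opprB. Qed.

Lemma congID g g' h h' : g ~= g' -> h ~= h' -> g + h ~= g' + h'.
Proof. by rewrite /congI opprD addrACA; apply: idealD. Qed.

Lemma congI_trans g h k : g ~= h -> h ~= k -> g ~= k.
Proof. by rewrite /congI -[g - k](subrKA h); apply: idealD. Qed.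

Lemma congI_mull0 a g : g ~= 0 -> a * g ~= 0.
Proof. by move/(congIMl a); rewrite mulr0. Qed.

Lemma congI_mulr0 a g : g ~= 0 -> g * a ~= 0.
Proof. by move/(congIMr a); rewrite mul0r. Qed.

Lemma congI_addl0 g h : h ~= 0 -> h + g ~= g.
Proof. by move/congID/(_ (congI_eq (erefl g))); rewrite add0r. Qed.

Lemma congI_addr0 g h : h ~= 0 -> g + h ~= g.
Proof. by rewrite addrC; apply: congI_addl0. Qed.

Lemma congI_commuteM a g h :
  a * g ~= g * a -> a * h ~= h * a -> a * (g * h) ~= g * h * a.
Proof.
move=> ag ah; rewrite mulrA; apply: congI_trans (congIMr h ag) _.
by rewrite -!mulrA; apply: congIMl.
Qed.

Lemma congI_commuteX g a c m : GRing.comm a c ->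
  g * a ~= c * a * g -> g * a ^+ m ~= c ^+ m * a ^+ m * g.
Proof.
move=> ac ga; elim: m => [|m IH]; first by apply: congI_eq; rewrite !expr0 mulr1 !mul1r.
rewrite exprSr mulrA; apply: congI_trans (congIMr a IH) _.
rewrite -[_ * g * a]mulrA; apply: congI_trans (congIMl _ ga) _.
apply: congI_eq; rewrite !mulrA -[c ^+ m * a ^+ m * c]mulrA.
by rewrite (commr_sym (commrX m (commr_sym ac))) mulrA -exprSr.
Qed.

Lemma congI_exprD_orthogonal u v m : u * v ~= 0 -> v * u ~= 0 ->
  (u + v) ^+ m.+1 ~= u ^+ m.+1 + v ^+ m.+1.
Proof.
move=> uv vu; elim: m => [|m IH]; first by apply: congI_eq; rewrite !expr1.
have uXv : u ^+ m.+1 * v ~= 0 by rewrite exprSr -mulrA; apply: congI_mull0.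
have vXu : v ^+ m.+1 * u ~= 0 by rewrite exprSr -mulrA; apply: congI_mull0.
rewrite exprSr; apply: congI_trans (congIMr _ IH) _.
rewrite mulrDl !mulrDr -!exprSr.
exact: congID (congI_addr0 _ uXv) (congI_addl0 _ vXu).
Qed.

Section Twisted.
Variables (x z c d : A).
Hypotheses (xx : x * x ~= 0) (zz : z * z ~= 0).
Hypotheses (c_central : forall g, GRing.comm g c) (d_central : forall g, GRing.comm g d).
Hypothesis dc : d * c = 1.
Local Notation a := (x * z + c * (z * x)).
Local Notation s := (x * z + z * x).

Lemma congI_x_twist : x * a ~= c * a * x.
Proof.
have -> : x * a = x * x * z + c * (x * z * x).
  by rewrite mulrDr !mulrA (c_central x).
have -> : c * a * x = c * (x * z * x) + c * (c * (z * (x * x))).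
  by rewrite mulrDr mulrDl !mulrA.
apply: congI_trans (congI_addl0 _ (congI_mulr0 _ xx)) _.
exact/congI_sym/congI_addr0/congI_mull0/congI_mull0/congI_mull0.
Qed.

Lemma congI_z_twist : z * a ~= d * a * z.
Proof.
have -> : z * a = z * x * z + c * (z * z * x).
  by rewrite mulrDr !mulrA (c_central z).
have -> : d * a * z = d * (x * (z * z)) + z * x * z.
  by rewrite mulrDr mulrDl !mulrA dc mul1r.
apply: congI_trans (congI_addr0 _ (congI_mull0 _ (congI_mulr0 _ zz))) _.
exact/congI_sym/congI_addl0/congI_mull0/congI_mull0.
Qed.

Variable n : nat.
Hypotheses (cn : c ^+ n = 1) (n_gt0 : (0 < n)%N).

Lemma congI_twistX : a ^+ n ~= s ^+ n.
Proof.
case: n cn n_gt0 => // m cm _.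
have xzzx : x * z * (z * x) ~= 0.
  by rewrite mulrA -(mulrA x); apply/congI_mulr0/congI_mull0.
have zxxz : z * x * (x * z) ~= 0.
  by rewrite mulrA -(mulrA z); apply/congI_mulr0/congI_mull0.
have xz_czx : x * z * (c * (z * x)) ~= 0.
  by rewrite mulrA (c_central (x * z)) -mulrA; apply: congI_mull0.
have czx_xz : c * (z * x) * (x * z) ~= 0 by rewrite -mulrA; apply: congI_mull0.
apply: congI_trans (congI_exprD_orthogonal m xz_czx czx_xz) _.
rewrite [(c * _) ^+ _]exprMn_comm; last exact: commr_sym (c_central _).
by rewrite cm mul1r; apply: congI_sym (congI_exprD_orthogonal m xzzx zxxz).
Qed.

Lemma congI_twistX_comm_x : a ^+ n * x ~= x * a ^+ n.
Proof.
apply: congI_sym; have := congI_commuteX n (c_central a) congI_x_twist.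
by rewrite cn mul1r.
Qed.

Lemma congI_twistX_comm_z : a ^+ n * z ~= z * a ^+ n.
Proof.
apply: congI_sym; have := congI_commuteX n (d_central a) congI_z_twist.
have -> : d ^+ n = 1.
  by rewrite -[d ^+ n]mulr1 -cn -(exprMn_comm n (c_central d)) dc expr1n.
by rewrite mul1r.
Qed.

Lemma congI_twistX_comm y : y * s ~= s * y -> a ^+ n * y ~= y * a ^+ n.
Proof.
move=> ys; have ys1 : y * s ~= 1 * s * y by rewrite mul1r.
have := congI_commuteX n (commr1 s) ys1; rewrite expr1n mul1r => ysn.
apply: congI_trans (congIMr _ congI_twistX) _.
exact: congI_trans (congI_sym ysn) (congIMl _ (congI_sym congI_twistX)).
Qed.

End Twisted.

End IdealCongruence.

Section MalgScalars.
Variables (R : comNzRingType) (K : monomType).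
Implicit Types g : {malg R[K]}.

Lemma scale_malgU (c x : R) (k : K) : c *: << x *g k >> = << c * x *g k >>.
Proof. by apply/malgP => k'; rewrite mcoeffZ !mcoeffU mulrnAr. Qed.

Lemma mulr_malgC c g : g * c%:MP = c *: g.
Proof.
rewrite malgM_def fgmulgU [in RHS](monalgE g) scaler_sumr.
by apply: eq_bigr => k _; rewrite scale_malgU mulm1 mulrC.
Qed.

Lemma scale_malgAr c g h : g * (c *: h) = c *: (g * h).
Proof. by rewrite -mulr_malgC mulrA mulr_malgC. Qed.

Lemma malgC_comm c g : GRing.comm g c%:MP.
Proof. by rewrite /GRing.comm mulr_malgC mul_malgC. Qed.

End MalgScalars.

Lemma cat_eq_nil (T : Type) (u v : seq T) : u ++ v = [::] -> u = [::] /\ v = [::].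
Proof. by case: u; case: v. Qed.

HB.instance Definition _ := Choice.on word.
HB.instance Definition _ := Choice_isMonomialDef.Build word
  (@catA _) (@cat0s _) (@cats0 _) (@cat_eq_nil _).

Section FreeAlgebra.
Variable F : fieldType.
Local Notation falg := {malg F[word]}.

Definition fa_malg (p : FA F) : falg := \sum_(t <- p) << t.1 *g t.2 >>.

Lemma mcoeff_fa_malg p w : (fa_malg p)@_w = fa_coef p w.
Proof.
rewrite /fa_malg /fa_coef raddf_sum [RHS]big_mkcond /=; apply: eq_bigr => t _.
by rewrite mcoeffU mulrb.
Qed.

Lemma fa_malg0 : fa_malg (fa_zero F) = 0.
Proof. exact: big_nil. Qed.

Lemma fa_malg1 : fa_malg (fa_one F) = 1.
Proof. exact: big_seq1. Qed.

Lemma fa_malgD p q : fa_malg (fa_add p q) = fa_malg p + fa_malg q.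
Proof. exact: big_cat. Qed.

Lemma fa_malgN p : fa_malg (fa_opp p) = - fa_malg p.
Proof. by rewrite /fa_malg big_map -sumrN; apply: eq_bigr => t _; rewrite monalgUN. Qed.

Lemma fa_malgB p q : fa_malg (fa_sub p q) = fa_malg p - fa_malg q.
Proof. by rewrite fa_malgD fa_malgN. Qed.

Lemma fa_malgM p q : fa_malg (fa_mul p q) = fa_malg p * fa_malg q.
Proof.
rewrite /fa_malg big_allpairs_dep mulr_suml; apply: eq_bigr => t _.
by rewrite mulr_sumr; apply: eq_bigr => u _; rewrite malgM_def fgmulUU.
Qed.

Lemma fa_malg_sum s : fa_malg (fa_sum s) = \sum_(p <- s) fa_malg p.
Proof.
elim: s => [|p s IH]; first by rewrite big_nil fa_malg0.
by rewrite big_cons -IH -fa_malgD.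
Qed.

Definition malg_fa (g : falg) : FA F := [seq (g@_k, k) | k <- msupp g].

Lemma malg_faK : cancel malg_fa fa_malg.
Proof. by move=> g; rewrite /fa_malg big_map [RHS]monalgE. Qed.

Definition rel_ideal (g : falg) : Prop := exists s : seq (falg * 'I_5 * falg),
  g = \sum_(t <- s) t.1.1 * fa_malg (C_rel F t.1.2) * t.2.

Lemma rel_ideal_rel r : rel_ideal (fa_malg (C_rel F r)).
Proof. by exists [:: (1, r, 1)]; rewrite big_seq1 mul1r mulr1. Qed.

Lemma rel_ideal0 : rel_ideal 0.
Proof. by exists [::]; rewrite big_nil. Qed.

Lemma rel_idealD g h : rel_ideal g -> rel_ideal h -> rel_ideal (g + h).
Proof. by case=> s -> [t ->]; exists (s ++ t); rewrite big_cat. Qed.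

Lemma rel_idealMl a g : rel_ideal g -> rel_ideal (a * g).
Proof.
case=> s ->; exists [seq (a * t.1.1, t.1.2, t.2) | t <- s].
by rewrite big_map mulr_sumr; apply: eq_bigr => t _; rewrite !mulrA.
Qed.

Lemma rel_idealMr g a : rel_ideal g -> rel_ideal (g * a).
Proof.
case=> s ->; exists [seq (t.1.1, t.1.2, t.2 * a) | t <- s].
by rewrite big_map mulr_suml; apply: eq_bigr => t _; rewrite !mulrA.
Qed.

Definition rel_twosided_ideal :=
  @TwoSidedIdeal _ rel_ideal rel_ideal0 rel_idealD rel_idealMl rel_idealMr.

End FreeAlgebra.

Local Notation "g ~= h" := (congI (rel_twosided_ideal _) g h) (at level 70).

Lemma congI_C_eq (F : fieldType) (p q : FA F) : fa_malg p ~= fa_malg q -> C_eq p q.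
Proof.
rewrite /congI /= -fa_malgB => -[s Es].
exists [seq (malg_fa t.1.1, t.1.2, malg_fa t.2) | t <- s] => w.
rewrite -!mcoeff_fa_malg fa_malg_sum big_map big_map Es; congr mcoeff.
by apply: eq_bigr => t _; rewrite !fa_malgM !malg_faK.
Qed.

Lemma congI_rel (F : fieldType) r : fa_malg (C_rel F r) ~= 0.
Proof. by rewrite /congI subr0; apply: rel_ideal_rel. Qed.

Section Sigma.
Variables (F : fieldType) (lam : F).
Local Notation falg := {malg F[word]}.

Definition sigma_weight (i : nat) (w : word) : F :=
  lam ^+ (i * count_mem gz w) / lam ^+ (i * count_mem gx w).

Lemma sigma_weight_cat i u v :
  sigma_weight i (u ++ v) = sigma_weight i u * sigma_weight i v.
Proof. by rewrite /sigma_weight !count_cat !mulnDr !exprD invfM mulrACA. Qed.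

Lemma fa_coef_sigma_pow i p w :
  fa_coef (sigma_pow lam i p) w = sigma_weight i w * fa_coef p w.
Proof.
rewrite /fa_coef big_map mulr_sumr; apply: eq_bigr => t /eqP <-.
by rewrite mulrC.
Qed.

Lemma sigma_powM i p q :
  sigma_pow lam i (fa_mul p q) = fa_mul (sigma_pow lam i p) (sigma_pow lam i q).
Proof.
rewrite /sigma_pow /fa_mul; elim: p => [|t p IH] //=.
rewrite map_cat IH -!map_comp; congr (_ ++ _); apply: eq_map => u /=.
by have := sigma_weight_cat i t.2 u.2; rewrite /sigma_weight => ->; rewrite mulrACA.
Qed.

Definition sigma_malg (i : nat) (g : falg) : falg :=
  fa_malg (sigma_pow lam i (malg_fa g)).

Lemma mcoeff_sigma_malg i g w : (sigma_malg i g)@_w = sigma_weight i w * g@_w.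
Proof. by rewrite mcoeff_fa_malg fa_coef_sigma_pow -mcoeff_fa_malg malg_faK. Qed.

Lemma fa_malg_sigma_pow i p : fa_malg (sigma_pow lam i p) = sigma_malg i (fa_malg p).
Proof.
by apply/malgP => w; rewrite mcoeff_sigma_malg !mcoeff_fa_malg fa_coef_sigma_pow.
Qed.

Lemma sigma_malg0g g : sigma_malg 0 g = g.
Proof.
by apply/malgP => w; rewrite mcoeff_sigma_malg /sigma_weight !mul0n divr1 mul1r.
Qed.

Section Morphism.
Variable i : nat.

Fact sigma_malg_is_linear : linear (sigma_malg i).
Proof.
move=> c g h; apply/malgP => w.
by rewrite !(mcoeffD, mcoeffZ, mcoeff_sigma_malg) mulrDr mulrCA.
Qed.

HB.instance Definition _ :=
  GRing.isLinear.Build F falg falg *:%R (sigma_malg i) sigma_malg_is_linear.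

Fact sigma_malg_is_monoid_morphism : monoid_morphism (sigma_malg i).
Proof.
split=> [|g h].
  by rewrite -fa_malg1 -fa_malg_sigma_pow /sigma_pow /= /sigma_weight !muln0 divr1 mul1r.
rewrite -[g]malg_faK -[h]malg_faK -fa_malgM -!fa_malg_sigma_pow.
by rewrite sigma_powM fa_malgM.
Qed.

HB.instance Definition _ :=
  GRing.isMonoidMorphism.Build falg falg (sigma_malg i) sigma_malg_is_monoid_morphism.

End Morphism.

Lemma sigma_malgC i c : sigma_malg i c%:MP = c%:MP.
Proof. by rewrite -[c%:MP]mul1r mulr_malgC linearZ rmorph1. Qed.

Lemma sigma_malg_gen i g :
  sigma_malg i (fa_malg (fa_gen F g)) =
  (sigma_weight i [:: g])%:MP * fa_malg (fa_gen F g).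
Proof.
apply/malgP => w; rewrite mcoeff_sigma_malg mcoeffCM !mcoeff_fa_malg /fa_coef big_mkcond.
by rewrite [in RHS]big_mkcond !big_seq1 /=; case: eqP => [<-|_]; rewrite ?mulr0.
Qed.

Lemma sigma_weight_x i : sigma_weight i [:: gx] = (lam ^+ i)^-1.
Proof. by rewrite /sigma_weight /= muln0 muln1 expr0 div1r. Qed.

Lemma sigma_weight_z i : sigma_weight i [:: gz] = lam ^+ i.
Proof. by rewrite /sigma_weight /= muln0 muln1 expr0 divr1. Qed.

End Sigma.

Lemma sum_iota_single (V : nmodType) m i0 (f : nat -> V) : (i0 < m)%N ->
  (forall i, (i < m)%N -> i != i0 -> f i = 0) -> \sum_(i <- iota 0 m) f i = f i0.
Proof.
move=> i0m f0; rewrite (bigD1_seq i0) ?iota_uniq ?mem_iota //= big1_seq ?addr0 //.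
by move=> i /andP[ii0]; rewrite mem_iota => /andP[_ im]; apply: f0.
Qed.

Section SmashProduct.
Variables (F : fieldType) (n : nat) (lam : F).
Local Notation falg := {malg F[word]}.
Local Notation sigma := (sigma_malg lam).

Lemma fa_malg_sm_mul a b k : fa_malg (sm_mul n lam a b k) =
  \sum_(i <- iota 0 n) \sum_(j <- iota 0 n | ((i + j) %% n == k)%N)
     fa_malg (a i) * sigma i (fa_malg (b j)).
Proof.
rewrite fa_malg_sum big_allpairs_dep; apply: eq_bigr => i _.
by rewrite big_filter; apply: eq_bigr => j _; rewrite fa_malgM fa_malg_sigma_pow.
Qed.

Definition sm_homog (a : SM F) (i0 : nat) (A : falg) :=
  forall i, (i < n)%N -> fa_malg (a i) = if i == i0 then A else 0.

Lemma sm_homog_pure c k : sm_homog (sm_pure c k) k (fa_malg c).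
Proof. by move=> i _; rewrite /sm_pure; case: eqP => // _; apply: fa_malg0. Qed.

Lemma sm_homog_one : sm_homog (sm_one F) 0 1.
Proof.
by move=> i _; rewrite /sm_one; case: eqP => _; [apply: fa_malg1 | apply: fa_malg0].
Qed.

Lemma sm_homogD a b i0 A B :
  sm_homog a i0 A -> sm_homog b i0 B -> sm_homog (sm_add a b) i0 (A + B).
Proof.
by move=> aA bB i lt_in; rewrite fa_malgD aA // bB //; case: eqP; rewrite ?addr0.
Qed.

Lemma sm_homogM a b i0 j0 A B : (i0 < n)%N -> (j0 < n)%N ->
  sm_homog a i0 A -> sm_homog b j0 B ->
  sm_homog (sm_mul n lam a b) ((i0 + j0) %% n) (A * sigma i0 B).
Proof.
move=> i0n j0n aA bB k kn; rewrite fa_malg_sm_mul (sum_iota_single i0n); last first.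
  by move=> i lt_in ii0; apply: big1 => j _; rewrite aA // (negbTE ii0) mul0r.
rewrite big_mkcond (sum_iota_single j0n); last first.
  by move=> j lt_jn jj0; rewrite bB // (negbTE jj0) raddf0 mulr0 if_same.
by rewrite aA // bB // !eqxx eq_sym.
Qed.

Lemma sm_homogX a i0 A m : (i0 < n)%N -> sm_homog a i0 A ->
  (forall i, sigma i A = A) -> sm_homog (sm_pow n lam a m) ((m * i0) %% n) (A ^+ m).
Proof.
move=> i0n aA A_inv; elim: m => [|m IH].
  by rewrite mul0n mod0n; apply: sm_homog_one.
have := sm_homogM i0n (ltn_pmod _ (leq_ltn_trans (leq0n _) i0n)) aA IH.
by rewrite modnDmr -mulSn rmorphXn /= A_inv -exprS.
Qed.

Lemma sm_mul_homog0l a b A k : sm_homog a 0 A -> (k < n)%N ->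
  fa_malg (sm_mul n lam a b k) = A * fa_malg (b k).
Proof.
move=> aA kn; have n_gt0 : (0 < n)%N by apply: leq_ltn_trans kn.
rewrite fa_malg_sm_mul (sum_iota_single n_gt0); last first.
  by move=> i lt_in ii0; apply: big1 => j _; rewrite aA // (negbTE ii0) mul0r.
rewrite big_mkcond (sum_iota_single kn); last first.
  by move=> j lt_jn jk; rewrite modn_small // (negbTE jk).
by rewrite modn_small // eqxx aA // sigma_malg0g.
Qed.

Lemma sm_mul_homog0r a b B k : sm_homog b 0 B -> (forall i, sigma i B = B) ->
  (k < n)%N -> fa_malg (sm_mul n lam a b k) = fa_malg (a k) * B.
Proof.
move=> bB B_inv kn; have n_gt0 : (0 < n)%N by apply: leq_ltn_trans kn.
have inner i : (i < n)%N -> \sum_(j <- iota 0 n | ((i + j) %% n == k)%N)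
    fa_malg (a i) * sigma i (fa_malg (b j)) = if i == k then fa_malg (a i) * B else 0.
  move=> lt_in; rewrite big_mkcond (sum_iota_single n_gt0).
    by rewrite addn0 modn_small // bB // B_inv; case: eqP.
  by move=> j lt_jn j0; rewrite bB // (negbTE j0) raddf0 mulr0 if_same.
rewrite fa_malg_sm_mul (sum_iota_single kn) ?inner ?eqxx // => i lt_in ik.
by rewrite inner // (negbTE ik).
Qed.

Lemma sm_central_homog0 w A : sm_homog w 0 A -> (forall i, sigma i A = A) ->
  (forall V, A * V ~= V * A) -> sm_central n lam w.
Proof.
move=> wA A_inv A_central v k kn; apply: congI_C_eq.
by rewrite (sm_mul_homog0l _ wA kn) (sm_mul_homog0r _ wA A_inv kn).
Qed.

End SmashProduct.

Section Relations.
Variable F : fieldType.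
Local Notation gen i := (fa_malg (fa_gen F i)).
Local Notation X := (gen gx).
Local Notation Y := (gen gy).
Local Notation Z := (gen gz).

Lemma congI_xx : X * X ~= 0.
Proof. by rewrite -fa_malgM; apply: (congI_rel F (@Ordinal 5 0 isT)). Qed.

Lemma congI_zz : Z * Z ~= 0.
Proof. by rewrite -fa_malgM; apply: (congI_rel F (@Ordinal 5 2 isT)). Qed.

Lemma congI_y_anticommxz : Y * (X * Z + Z * X) ~= (X * Z + Z * X) * Y.
Proof.
have xyz : rel_ideal
    (fa_malg (fa_comm (fa_anticomm (fa_gen F gx) (fa_gen F gy)) (fa_gen F gz))).
  exact: (rel_ideal_rel F (@Ordinal 5 3 isT)).
have yzx : rel_ideal
    (fa_malg (fa_comm (fa_anticomm (fa_gen F gy) (fa_gen F gz)) (fa_gen F gx))).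
  exact: (rel_ideal_rel F (@Ordinal 5 4 isT)).
rewrite /congI /= commr_anticomm_jacobi.
move: xyz yzx; rewrite /fa_comm /fa_anticomm !(fa_malgB, fa_malgD, fa_malgM).
exact: rel_idealD.
Qed.

Lemma congI_commute_gen P : P * X ~= X * P -> P * Y ~= Y * P -> P * Z ~= Z * P ->
  forall V, P * V ~= V * P.
Proof.
move=> PX PY PZ; have Pword (w : word) : P * << 1 *g w >> ~= << 1 *g w >> * P.
  elim: w => [|i w IH]; first by apply: congI_eq; rewrite mulr1 mul1r.
  have -> : << (1 : F) *g (i :: w) >> = gen i * << 1 *g w >>.
    by rewrite [gen i]big_seq1 malgM_def fgmulUU mulr1.
  apply: congI_commuteM IH.
  have : [\/ i = gx, i = gy | i = gz].
    case: i => -[|[|[|//]]] ?; [constructor 1 | constructor 2 | constructor 3];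
    exact: val_inj.
  by case=> ->; [exact: PX | exact: PY | exact: PZ].
move=> V; rewrite (monalgE V) mulr_sumr mulr_suml.
apply: (big_ind2 (congI _)) => [|g1 g2 h1 h2|w _]; first exact: congI_eq.
  exact: congID.
rewrite -[V@_w]mulr1 -scale_malgU -mul_malgC mulrA (malgC_comm _ P) -!mulrA.
exact: congIMl (Pword w).
Qed.

End Relations.

Section XZTwist.
Variables (F : fieldType) (lam : F).
Local Notation gen i := (fa_malg (fa_gen F i)).
Local Notation X := (gen gx).
Local Notation Z := (gen gz).
Local Notation a := (X * Z + lam%:MP * (Z * X)).

Lemma sigma_xz_twist i : lam != 0 -> sigma_malg lam i a = a.
Proof.
move=> lam_neq0; have lami : lam ^+ i != 0 by rewrite expf_neq0.
rewrite rmorphD !rmorphM /= sigma_malgC !sigma_malg_gen sigma_weight_x sigma_weight_z.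
rewrite !mul_malgC -!scalerAl !scale_malgAr !scalerA.
by rewrite (mulVf lami) (mulfK lami) scale1r.
Qed.

Section PrimitiveRoot.
Variable n : nat.
Hypothesis prim : n.-primitive_root lam.
Local Notation w :=
  (sm_add (sm_mul n lam (x' F) (z' F n)) (sm_mul n lam (z' F n) (x' F))).

Let n_gt0 : (0 < n)%N := prim_order_gt0 prim.
Let lamn : lam ^+ n = 1 := prim_expr_order prim.
Let lam_neq0 : lam != 0.
Proof. by rewrite (prim_root_eq0 prim) -lt0n. Qed.
Let n1_lt_n : (n.-1 < n)%N.
Proof. by rewrite prednK. Qed.

Lemma sm_homog_x'z'_anticomm : sm_homog n w n.-1 a.
Proof.
have hx : sm_homog n (x' F) 0 X := sm_homog_pure _ _.
have hz : sm_homog n (z' F n) n.-1 Z := sm_homog_pure _ _.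
have hxz := sm_homogM lam n_gt0 n1_lt_n hx hz.
have hzx := sm_homogM lam n1_lt_n n_gt0 hz hx.
rewrite add0n modn_small // in hxz; rewrite addn0 modn_small // in hzx.
have := sm_homogD hxz hzx; rewrite sigma_malg0g sigma_malg_gen sigma_weight_x.
have -> : (lam ^+ n.-1)^-1 = lam by apply: mulr1_eq; rewrite -exprSr prednK.
by rewrite mulrA (malgC_comm _ Z) -mulrA.
Qed.

Lemma sm_homog_x'z'_anticommX : sm_homog n (sm_pow n lam w n) 0 (a ^+ n).
Proof.
have := sm_homogX n n1_lt_n sm_homog_x'z'_anticomm (fun i => sigma_xz_twist i lam_neq0).
by rewrite modnMr.
Qed.

Lemma sigma_xz_twistX i : sigma_malg lam i (a ^+ n) = a ^+ n.
Proof. by rewrite rmorphXn /= sigma_xz_twist. Qed.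

Lemma congI_xz_twistX_central V : a ^+ n * V ~= V * a ^+ n.
Proof.
have xx := congI_xx F; have zz := congI_zz F.
have lamMPn : lam%:MP ^+ n = 1 :> {malg F[word]} by rewrite -rmorphXn lamn rmorph1.
have lamV_lam : lam^-1%:MP * lam%:MP = 1 :> {malg F[word]}.
  by rewrite -rmorphM mulVf // rmorph1.
apply: congI_commute_gen.
- exact: (congI_twistX_comm_x (c := lam%:MP) Z xx (malgC_comm lam) lamMPn).
- exact: (congI_twistX_comm (c := lam%:MP) xx zz (malgC_comm lam) lamMPn n_gt0
            (congI_y_anticommxz F)).
- exact: (congI_twistX_comm_z (c := lam%:MP) (d := lam^-1%:MP) X zz (malgC_comm lam)
            (malgC_comm lam^-1) lamV_lam lamMPn).
Qed.

End PrimitiveRoot.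
End XZTwist.

Theorem mainTheorem17 (n : nat) (lam : CC) :
  n.-primitive_root lam ->
  sm_central n lam
    (sm_pow n lam (sm_add (sm_mul n lam (x' CC) (z' CC n))
                          (sm_mul n lam (z' CC n) (x' CC))) n).
Proof.
move=> prim.
apply: (sm_central_homog0 (sm_homog_x'z'_anticommX prim) (sigma_xz_twistX prim)).
exact: congI_xz_twistX_central.
Qed.
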